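(* Let $p$ be a prime, let $G$ be a finite $p$-solvable group, and let $P$ be a Sylow $p$-subgroup of $G$. Suppose that there is a subgroup $H$ of $P$ with $P' \le H \le \Phi(P)$ such that $H$ is $s$-semipermutable in $G$. Suppose moreover that $N_G(P)$ is $p$-supersolvable. Then $G$ is $p$-supersolvable.
   Context: All groups are finite. $P'$ denotes the derived (commutator) subgroup of $P$ and $\Phi(P)$ its Frattini subgroup. A group is $p$-supersolvable if every chief factor of order divisible by $p$ is cyclic (of order $p$). A subgroup $H$ of $G$ is $s$-semipermutable in $G$ if $HQ = QH$ for every Sylow $q$-subgroup $Q$ of $G$ and every prime $q$ not dividing $|H|$. *)

From mathcomp Require Import all_boot all_fingroup all_solvable.
Set Implicit Arguments. Unset Strict Implicit. Unset Printing Implicit Defensive.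
Local Open Scope group_scope.

Definition p_solvable (gT : finGroupType) (p : nat) (G : {set gT}) : Prop :=
  forall U V : {group gT},
    subnormal U G -> maxnormal V U U ->
    p.-group (U / V) \/ p^'.-group (U / V).

Definition p_supersolvable (gT : finGroupType) (p : nat) (G : {set gT}) : Prop :=
  forall U V : {group gT},
    chief_factor G V U -> p %| #|U / V| -> #|U / V| = p.

Definition s_semipermutable (gT : finGroupType) (H G : {set gT}) : Prop :=
  forall q : nat, prime q -> ~~ (q %| #|H|) ->
    forall Q : {group gT}, Q \in 'Syl_q(G) -> H * Q = Q * H.

From mathcomp Require Import all_boot all_fingroup all_solvable.
Set Implicit Arguments.
Unset Strict Implicit.
Unset Printing Implicit Defensive.
Local Open Scope group_scope.

(* Induction on |G|: the hypotheses pass to quotients, so only a chief factor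
   U / 1 with U minimal normal matters, and we may assume O_p'(G) = 1; then U
   is a p-subgroup of P. If P centralizes U, a Frattini argument makes U
   minimal normal in N_G(P), so |U| = p. Otherwise 1 != [U, P] <= U :&: H,
   and s-semipermutability of H forces U :&: H <| G, hence U <= H <= Phi(P).
   This gives O_p'(G / U) = 1; as G / U is p-supersolvable, the normal
   subgroup P / U * O_p'(G / U) is just P / U, so N_G(P) = G. *)

Section ChiefFactors.

Variable gT : finGroupType.
Implicit Types G N U V : {group gT}.

Lemma chief_factor_card G V U : chief_factor G V U -> #|U / V| = #|U : V|.
Proof.
case/andP=> /maxgroupp/andP[_ nVG] /andP[sUG _].
by rewrite card_quotient // (subset_trans sUG nVG).
Qed.

Lemma chief_factor1E G U : chief_factor G 1 U = minnormal U G && (U <| G).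
Proof.
apply/idP/andP=> [chU | [minU nsUG]].
  have /andP[/maxgroupP[/andP[pr1U _] max1] nsUG] := chU.
  split=> //; apply/mingroupP; split.
    by rewrite -proper1G pr1U normal_norm.
  move=> W /andP[ntW nWG] sWU; apply/eqP; rewrite eqEsubset sWU /=.
  apply: contraR ntW => nsUW.
  by rewrite (max1 W) ?sub1G // properE sWU nsUW.
rewrite /chief_factor nsUG andbT; apply/maxgroupP; split.
  by rewrite norm1 subsetT andbT proper1G; case/mingroupP: minU => /andP[].
case/mingroupP: minU => _ minU W /andP[prWU nWG] _; apply/val_inj/eqP => /=.
apply: contraT => ntW.
have eqWU : W :=: U by apply: minU; rewrite ?ntW ?nWG ?(proper_sub prWU).
by rewrite eqWU properE subxx in prWU.
Qed.

Lemma chief_factor_quotient G N V U :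
    N <| G -> chief_factor G V U -> U :&: N \subset V ->
  chief_factor (G / N) (V / N) (U / N) /\ #|U / N : V / N| = #|U : V|.
Proof.
move=> nsNG /andP[maxV nsUG] sUNV.
have [/andP[prVU nVG] maxV'] := maxgroupP maxV.
have [sUG nUG] := andP nsUG; have nNG := normal_norm nsNG.
have nNU : U \subset 'N(N) := subset_trans sUG nNG.
have sVU := proper_sub prVU; have nNV := subset_trans sVU nNU.
have idx : #|U / N : V / N| = #|U : V| := index_quotient_eq sUNV sVU nNU.
split=> //; rewrite /chief_factor quotient_normal // andbT.
apply/maxgroupP; split.
  rewrite /= quotient_norms // andbT properE quotientS //=.
  by rewrite -indexg_gt1 idx indexg_gt1; case/andP: prVU.
move=> W' /andP[prWU nWG] sVW.
pose W := (U :&: coset N @*^-1 W')%G.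
have sVW0 : V \subset W by rewrite subsetI sVU -sub_quotient_pre.
have nWG0 : G \subset 'N(W).
  rewrite normsI // (subset_trans _ (morphpre_norm _ _)) //.
  by rewrite -sub_quotient_pre.
have defW' : W' :=: W / N.
  rewrite /= -[(U :&: _) / N]/(coset N @* (U :&: coset N @*^-1 W')).
  rewrite morphim_setIpre -/(U / N).
  by apply/esym/setIidPr; apply: proper_sub prWU.
have [eqWU | prW] := eqVproper (subsetIl U (coset N @*^-1 W')).
  by case/andP: prWU => _ /negP[]; rewrite defW' /= eqWU.
by apply: val_inj; rewrite /= defW' (maxV' W) ?prW.
Qed.

End ChiefFactors.

Section PSolvable.

Variables (gT : finGroupType) (p : nat).
Implicit Types G K N S U : {group gT}.

Lemma subnormal_sub_pcore pi K S :
  S <|<| K -> pi.-group S -> S \subset 'O_pi(K).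
Proof.
move=> snS piS; have [n leKn] := ubnP #|K|.
elim: n K leKn snS => // n IHn K /ltnSE leKn snS.
have [<- | [M [snSM nsMK prMK]]] := subnormalEr snS; first exact: pcore_max.
apply: subset_trans (IHn M _ snSM) _.
  exact: leq_trans (proper_card prMK) _.
exact: pcore_max (pcore_pgroup _ _) (char_normal_trans (pcore_char _ _) nsMK).
Qed.

Lemma p_solvable_minnormal G U :
  p_solvable p G -> minnormal U G -> U <| G -> p.-group U \/ p^'.-group U.
Proof.
move=> psG minU nsUG; have [sUG _] := andP nsUG.
have /charsimpleP[ntU charU] := minnormal_charsimple minU.
have snUG := normal_subnormal nsUG.
pose gP S := (S :!=: 1) && (S <|<| G); have gPU : gP U by rewrite /gP ntU.
have [S /mingroupP[/andP[ntS snS] minS] sSU] := mingroup_exists gPU.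
have simS : simple S.
  apply/mingroupP; split; first by rewrite ntS normG.
  move=> K /andP[ntK nKS] sKS; apply: minS => //.
  by rewrite /gP ntK (subnormal_trans _ snS) // normal_subnormal // /normal sKS.
have snSU : S <|<| U by have := setI_subnormal sUG snS; rewrite (setIidPl sSU).
have pi_U pi : pi.-group S -> pi.-group U.
  move=> piS; rewrite -(charU 'O_pi(U)%G) ?pcore_pgroup ?pcore_char //.
  by apply: contraNneq ntS => O1; rewrite -subG1 -O1 subnormal_sub_pcore.
have /(psG S 1%G snS) : maxnormal 1 S S by rewrite -simple_maxnormal.
rewrite /pgroup card_quotient ?norm1 ?subsetT // indexg1.
by case=> /pi_U; auto.
Qed.

Lemma cosetpre_subnormal N (A B : {group coset_of N}) :
  A <|<| B -> coset N @*^-1 A <|<| coset N @*^-1 B.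
Proof.
case/subnormalP=> s As <-{B}; apply/subnormalP.
exists (map (fun K : {group coset_of N} => (coset N @*^-1 K)%G) s).
  elim: s A As => //= K s IHs A /andP[nAK Ks].
  by rewrite cosetpre_normal nAK IHs.
by elim/last_ind: s {As} => //= s K _; rewrite map_rcons !last_rcons.
Qed.

Lemma cosetpre_maxnormal N (A B C : {group coset_of N}) :
  maxnormal A B C ->
  maxnormal (coset N @*^-1 A) (coset N @*^-1 B) (coset N @*^-1 C).
Proof.
case/maxgroupP=> /andP[prAB nAC] maxA; apply/maxgroupP; split.
  by rewrite cosetpre_proper prAB morphpre_norms.
move=> W /andP[prWB nWC] sAW.
have sNW : N \subset W := subset_trans (sub_cosetpre _) sAW.
have nNW : W \subset 'N(N) := subset_trans (proper_sub prWB) (subsetIl _ _).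
have defW : coset N @*^-1 (W / N) = W by apply: quotientGK; apply/andP.
have nWNC : C \subset 'N(W / N) by rewrite -(cosetpreK C) quotient_norms.
have prWNB : W / N \proper B by rewrite -cosetpre_proper defW.
have sAWN : A \subset W / N by rewrite -(cosetpreK A) quotientS.
by apply: val_inj; rewrite /= -defW (maxA (W / N)%G) ?prWNB.
Qed.

Lemma p_solvable_quotient G N :
  N <| G -> p_solvable p G -> p_solvable p (G / N).
Proof.
move=> nsNG psG U V snU maxV.
have snUG : coset N @*^-1 U <|<| G.
  by rewrite -(quotientGK nsNG); apply: (@cosetpre_subnormal N _ (G / N)%G).
have maxV0 := cosetpre_maxnormal maxV.
have := psG _ _ snUG maxV0.
have [nsV nsV'] := (maxnormal_normal maxV0, maxnormal_normal maxV).
rewrite /pgroup !card_quotient ?(normal_norm nsV) ?(normal_norm nsV') //.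
rewrite index_morphpre //= ?ker_coset //.
by rewrite -[coset N @* _]/('N(N) / N) im_quotient subsetT.
Qed.

End PSolvable.

Lemma p_supersolvable_morphim (gT rT : finGroupType) p (G : {group gT})
    (f : {morphism G >-> rT}) :
  p_supersolvable p G -> p_supersolvable p (f @* G).
Proof.
move=> pssG U V chUV; have /andP[maxV nsUfG] := chUV.
have kerG : 'ker f \subset G := subset_trans (ker_sub_pre f 1%G) (subsetIl _ _).
have defG : f @*^-1 (f @* G) = G := morphimGK kerG (subxx _).
have [/andP[prVU nVfG] maxV'] := maxgroupP maxV.
have sUfG := normal_sub nsUfG; have sVfG := subset_trans (proper_sub prVU) sUfG.
have chUV0 : chief_factor G (f @*^-1 V) (f @*^-1 U).
  have nsU0 : f @*^-1 U <| G by rewrite -[X in _ <| X]defG morphpre_normal.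
  rewrite /chief_factor nsU0 andbT; apply/maxgroupP; split.
    rewrite /= morphpre_proper // prVU /=.
    by have := morphpre_norms f nVfG; rewrite defG.
  move=> W /andP[prWU nWG] sVW.
  have sWG : W \subset G := subset_trans (proper_sub prWU) (subsetIl _ _).
  have defW : f @*^-1 (f @* W) = W.
    exact: morphimGK (subset_trans (ker_sub_pre f V) sVW) sWG.
  have prfWU : f @* W \proper U.
    by rewrite -(morphpre_proper (f := f)) ?defW ?morphimS.
  have sVfW : V \subset f @* W by rewrite -(morphpreK sVfG) morphimS.
  by apply: val_inj; rewrite /= -defW (maxV' (f @* W)%G) ?prfWU ?morphim_norms.
rewrite (chief_factor_card chUV) => pUV.
have := pssG _ _ chUV0; rewrite (chief_factor_card chUV0) /= index_morphpre //.
by apply.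
Qed.

Lemma p_supersolvable_quotient (gT : finGroupType) p (K N : {group gT}) :
  K \subset 'N(N) -> p_supersolvable p K -> p_supersolvable p (K / N).
Proof.
move=> nNK /(p_supersolvable_morphim (f := [morphism of restrm nNK (coset N)])).
by rewrite morphim_restrm setIid.
Qed.

Section SylowQuotients.

Variables (gT : finGroupType) (p : nat).
Implicit Types G H N P Q : {group gT}.

Lemma quotient_subnorm_Sylow G N P :
  N <| G -> p.-Sylow(G) P -> 'N_(G / N)(P / N) = 'N_G(P) / N.
Proof.
move=> nsNG sylP; have [sNG nNG] := andP nsNG; have sPG := pHall_sub sylP.
have nNP : P \subset 'N(N) := subset_trans sPG nNG.
pose NP := (N <*> P)%G; have defNP : NP :=: N * P := norm_joinEr nNP.
have sNPG : NP \subset G by rewrite join_subG sNG sPG.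
have nsNNP : N <| NP by rewrite /normal joing_subl join_subG normG nNP.
have sylP_NP : p.-Sylow(NP) P := pHall_subl (joing_subr _ _) sNPG sylP.
have defN := Frattini_arg (normalSG sNPG) sylP_NP.
have -> : P / N = NP / N by rewrite defNP quotientMidl.
rewrite -quotient_subnormG //; apply/eqP; rewrite eqEsubset; apply/andP; split.
  rewrite -defN defNP -mulgA quotientMidl quotientMl //.
  apply: mul_subG; apply: quotientS; first by rewrite subsetI sPG normG.
  exact: setSI (subsetIl _ _).
apply: quotientS; rewrite subsetI subsetIl /= defNP.
by rewrite normsM ?subsetIr // (subset_trans (subsetIl G _) nNG).
Qed.

Lemma s_semipermutable_quotient G H P N :
    N <| G -> p.-Sylow(G) P -> H \subset P ->
  s_semipermutable H G -> s_semipermutable (H / N) (G / N).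
Proof.
move=> nsNG sylP sHP sH q prq q'HN QN; rewrite inE => sylQN.
have [sNG nNG] := andP nsNG; have pH := pgroupS sHP (pHall_pgroup sylP).
have nNH := subset_trans (subset_trans sHP (pHall_sub sylP)) nNG.
pose M := (coset N @*^-1 QN)%G.
have sMG : M \subset G by rewrite sub_cosetpre_quo ?(pHall_sub sylQN).
have [Q sylQ_M] := Sylow_exists q M; have sQM := pHall_sub sylQ_M.
have nNQ := subset_trans (subset_trans sQM sMG) nNG.
have defQN : Q / N = QN.
  have := quotient_pHall nNQ sylQ_M; rewrite /= cosetpreK => sylQN_QN.
  exact: pHall_id sylQN_QN (pHall_pgroup sylQN).
have sylQ : q.-Sylow(G) Q.
  rewrite /pHall (subset_trans sQM sMG) (pHall_pgroup sylQ_M) /=.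
  rewrite -(Lagrange_index sMG sQM) pnatM; case/and3P: sylQ_M => _ _ ->.
  have sGNM : G :&: N \subset M by rewrite subIset // sub_cosetpre orbT.
  rewrite andbT -(@index_quotient_eq _ G N M) //=.
  by rewrite cosetpreK; case/and3P: sylQN.
have [qH | q'H] := boolP (q %| #|H|); last first.
  have defHQ : H * Q = Q * H by apply: (sH q); rewrite ?inE.
  by rewrite -defQN -!quotientMl ?defHQ // (subset_trans (pHall_sub sylQ) nNG).
suff ->: H / N = 1 by rewrite mul1g mulg1.
have /pgroupP/(_ q prq qH) := pH; rewrite inE => /eqP defq.
apply: card1_trivg; apply: pnat_1 (quotient_pgroup _ pH) _.
by rewrite -defq p'natE.
Qed.

End SylowQuotients.

Section Normalizers.

Variable gT : finGroupType.
Implicit Types G H M P Q R U : {group gT}.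

Lemma norm_Sylows G (A : {set gT}) :
    (forall q, prime q ->
       exists2 Q : {group gT}, q.-Sylow(G) Q & Q \subset 'N(A)) ->
  G \subset 'N(A).
Proof.
move=> nA_Syl; suff: G \subset 'N_G(A) by rewrite subsetI => /andP[].
rewrite -indexg_eq1 eqn_leq indexg_gt0 andbT leqNgt.
apply/negP=> /pdivP[q prq q_dv_idx]; have [Q sylQ nAQ] := nA_Syl q prq.
have sQN : Q \subset 'N_G(A) by rewrite subsetI (pHall_sub sylQ).
have /and3P[_ _ q'GQ] := sylQ.
have : q^'.-nat #|G : 'N_G(A)|.
  apply: pnat_dvd q'GQ.
  by rewrite -(Lagrange_index (subsetIl G _) sQN) dvdn_mulr.
by rewrite p'natE // q_dv_idx.
Qed.

(* In H * Q, a group by semipermutability, H is a Sylow p-subgroup, so it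
   contains the normal p-subgroup U :&: H * Q. *)
Lemma s_semipermutable_norm_setI (p : nat) G H U q Q :
    p.-group H -> H \subset G -> s_semipermutable H G ->
    U <| G -> p.-group U -> prime q -> q != p -> q.-Sylow(G) Q ->
  Q \subset 'N(U :&: H).
Proof.
move=> pH sHG sH nsUG pU prq qp sylQ; have [sQG pQ _] := and3P sylQ.
have q'H : ~~ (q %| #|H|).
  by apply: contra qp => /(pgroupP pH q prq); rewrite inE.
have defHQ : H * Q = Q * H by apply: (sH q); rewrite ?inE.
pose HQ := (H <*> Q)%G; have defHQ' : HQ :=: H * Q := comm_joingE defHQ.
have p'Q : p^'.-group Q by apply: sub_pgroup pQ => r /eqP->; rewrite !inE.
have sylH : p.-Hall(HQ) H.
  rewrite /pHall joing_subl pH /= -divgS ?joing_subl // defHQ'.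
  by rewrite (TI_cardMg (coprime_TIg (pnat_coprime pH p'Q))) mulKn.
have sHQG : HQ \subset G by rewrite join_subG sHG.
have nsUHQ : HQ :&: U <| HQ := normalGI sHQG nsUG.
have sUHQ_H : HQ :&: U \subset H.
  exact: subset_trans (pcore_max (pgroupS (subsetIr _ _) pU) nsUHQ)
                      (pcore_sub_Hall sylH).
have <- : HQ :&: U = U :&: H.
  apply/eqP; rewrite eqEsubset subsetI sUHQ_H subsetIr /=.
  by rewrite subsetI subsetIl andbT (subset_trans (subsetIr _ _)) ?joing_subl.
rewrite normsI ?(subset_trans sQG (normal_norm nsUG)) //.
exact: subset_trans (joing_subr H Q) (normG _).
Qed.

Lemma coprime_Frattini_arg G M U R :
    solvable U -> M <| G -> U ><| R = M -> coprime #|U| #|R| ->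
  M * 'N_G(R) = G.
Proof.
move=> solU /andP[sMG nMG] defM coUR.
have [_ defUR nUR _] := sdprodP defM.
apply/eqP; rewrite eqEsubset mul_subG ?subsetIl ?sMG //=.
apply/subsetP=> g Gg.
have sRgM : R :^ g \subset U * R.
  by rewrite defUR -(normsP nMG g Gg) conjSg -defUR mulG_subr.
have [u Uu defRg] :=
  SchurZassenhaus_trans_sol solU nUR sRgM coUR (cardJg _ _).
have Mu : u \in M by rewrite -defUR (subsetP (mulG_subl _ _)).
have Ngu : g * u^-1 \in 'N_G(R).
  rewrite inE groupM ?groupV ?(subsetP sMG u Mu) //=.
  by apply/normP; rewrite conjsgM defRg conjsgK.
have nMN : 'N_G(R) \subset 'N(M) := subset_trans (subsetIl _ _) nMG.
by have := mem_mulg Ngu Mu; rewrite mulgKV (normC nMN).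
Qed.

(* A p'-Hall complement R of U in the preimage of O_p'(G / U) has
   G = U * 'N_G(R); as U lies in 'Phi(P), P is generated by its part in
   'N_G(R), so R is normal and hence trivial. *)
Lemma trivg_pcore_quotient_Phi p G P U :
    p.-Sylow(G) P -> U <| G -> U \subset 'Phi(P) -> 'O_p^'(G) = 1 ->
  'O_p^'(G / U) = 1.
Proof.
move=> sylP nsUG sUPhi p'G1; have [sUG nUG] := andP nsUG.
have sUP := subset_trans sUPhi (Phi_sub P).
have pU : p.-group U := pgroupS sUP (pHall_pgroup sylP).
pose M := (coset U @*^-1 'O_p^'(G / U))%G.
have nsMG : M <| G by rewrite -(quotientGK nsUG) cosetpre_normal pcore_normal.
have sMG := normal_sub nsMG.
have sUM : U \subset M := sub_cosetpre _.
have nsUM : U <| M := normalS sUM sMG nsUG.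
have defMU : M / U = 'O_p^'(G / U) := cosetpreK _.
have p'MU : p^'.-nat #|M : U|.
  by rewrite -card_quotient ?normal_norm // defMU; apply: pcore_pgroup.
have hallU : Hall M U by rewrite /Hall sUM (pnat_coprime pU p'MU).
have [R /complP[tiUR defUR]] := splitsP (SchurZassenhaus_split hallU nsUM).
have sRM : R \subset M by rewrite -defUR mulG_subr.
have nUR := subset_trans sRM (normal_norm nsUM).
have defM : U ><| R = M by rewrite sdprodE.
have p'R : p^'.-group R by rewrite /pgroup (index_sdprod defM).
have defG : U * 'N_G(R) = G.
  have sRN : R \subset 'N_G(R) by rewrite subsetI normG (subset_trans sRM sMG).
  have coUR := pnat_coprime pU p'R.
  rewrite -{2}(coprime_Frattini_arg (pgroup_sol pU) nsMG defM coUR).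
  by rewrite -defUR -mulgA (mulSGid sRN).
have sPN : P \subset 'N_G(R).
  have defP : U * ('N_G(R) :&: P) = P.
    by rewrite group_modl // defG (setIidPr (pHall_sub sylP)).
  have : 'Phi(P) <*> ('N_G(R) :&: P) = P.
    apply/eqP; rewrite eqEsubset join_subG Phi_sub subsetIr /=.
    rewrite -{1}defP mul_subG ?joing_subr //.
    exact: subset_trans sUPhi (joing_subl _ _).
  by move/Phi_nongen; rewrite genGid => <-; apply: subsetIl.
have nRG : G \subset 'N(R).
  by rewrite -defG mulSGid ?(subset_trans sUP sPN) // subsetIr.
have sRG := subset_trans sRM sMG.
have R1 : R :=: 1 by apply/trivgP; rewrite -p'G1 pcore_max // /normal sRG.
by rewrite -defMU -defUR R1 mulg1 trivg_quotient.
Qed.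

Lemma minnormal_subnorm_Sylow p G P U :
    p.-Sylow(G) P -> minnormal U G -> U <| G -> U \subset P ->
    P \subset 'C(U) ->
  minnormal U 'N_G(P).
Proof.
move=> sylP minU nsUG sUP cUP; have [sUG nUG] := andP nsUG.
have [/andP[ntU _] minUG] := mingroupP minU.
have nsCG : 'C_G(U) <| G by rewrite norm_normalI // norms_cent.
have sylP_C : p.-Sylow('C_G(U)) P.
  by rewrite (pHall_subl _ (subsetIl _ _) sylP) // subsetI (pHall_sub sylP).
have defG := Frattini_arg nsCG sylP_C.
apply/mingroupP; split; first by rewrite ntU (subset_trans (subsetIl _ _) nUG).
move=> W /andP[ntW nWN] sWU; apply: minUG => //.
rewrite ntW -defG mul_subG // cents_norm //.
exact: subset_trans (subsetIr _ _) (centS sWU).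
Qed.

End Normalizers.

Section SylowP'coreProduct.

Variables (gT : finGroupType) (p : nat).
Implicit Types K N P X Y : {group gT}.

Lemma normal_quotientK N X Y :
  N <| X -> N <| Y -> (X / N <| Y / N) = (X <| Y).
Proof. by move=> nsNX nsNY; rewrite -cosetpre_normal !quotientGK. Qed.

Lemma Sylow_p'core_normal_p'quotient Y P N :
    P \subset Y -> N <| Y -> p^'.-group N ->
    P / N * 'O_p^'(Y / N) <| Y / N ->
  P * 'O_p^'(Y) <| Y.
Proof.
move=> sPY nsNY p'N; have nNY := normal_norm nsNY.
have nRP : P \subset 'N('O_p^'(Y)) := subset_trans sPY (gFnorm _ _).
have sNR : N \subset 'O_p^'(Y) := pcore_max p'N nsNY.
rewrite (pquotient_pcore nsNY p'N) -quotientMl ?(subset_trans sPY) //.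
rewrite (normC nRP) -norm_joinEr // normal_quotientK //.
rewrite /normal (subset_trans sNR (joing_subl _ _)) join_subG.
by rewrite !(subset_trans _ nNY) ?gFsub.
Qed.

Lemma cent_normal_Hall_mul_pcore K N :
    N <| K -> K \subset 'C(N) -> p.-group N -> p^'.-nat #|K : N| ->
  N * 'O_p^'(K) = K.
Proof.
move=> nsNK cNK pN p'KN; have [sNK nNK] := andP nsNK.
have hallN : Hall K N by rewrite /Hall sNK (pnat_coprime pN p'KN).
have [L /complP[tiNL defNL]] := splitsP (SchurZassenhaus_split hallN nsNK).
have sLK : L \subset K by rewrite -defNL mulG_subr.
have nsLK : L <| K.
  rewrite /normal sLK -defNL mul_subG ?normG // cents_norm // centsC.
  exact: subset_trans sLK cNK.
have p'L : p^'.-group L.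
  have defK : N ><| L = K by rewrite sdprodE ?(subset_trans sLK nNK).
  by rewrite /pgroup (index_sdprod defK).
apply/eqP; rewrite eqEsubset mul_subG ?pcore_sub //=.
by rewrite -{1}defNL mulgS // pcore_max.
Qed.

(* P * O_p'(Y) = (P * M :&: 'C_Y(N)) * O_p'(Y) with M / N = O_p'(Y / N),
   because M :&: 'C_Y(N) is N times its p'-core, which lies in O_p'(Y). *)
Lemma Sylow_p'core_normal_pquotient Y P N :
    p.-Sylow(Y) P -> N <| Y -> p.-group N -> P \subset 'C(N) ->
    P / N * 'O_p^'(Y / N) <| Y / N ->
  P * 'O_p^'(Y) <| Y.
Proof.
move=> sylP nsNY pN cNP nsPRN; have [sNY nNY] := andP nsNY.
have sPY := pHall_sub sylP.
have sNP := subset_trans (pcore_max pN nsNY) (pcore_sub_Hall sylP).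
have nNP := subset_trans sPY nNY.
pose M := (coset N @*^-1 'O_p^'(Y / N))%G.
have nsMY : M <| Y by rewrite -(quotientGK nsNY) cosetpre_normal pcore_normal.
have [sMY nMY] := andP nsMY; have nMP := subset_trans sPY nMY.
have sNM : N \subset M := sub_cosetpre _.
have nsPM : P <*> M <| Y.
  rewrite -(normal_quotientK (N := N)) //; last first.
    rewrite /normal (subset_trans sNP (joing_subl _ _)) join_subG nNP.
    exact: subset_trans sMY nNY.
  by rewrite /= norm_joinEl // quotientMl // cosetpreK.
pose K0 := (M :&: 'C_Y(N))%G.
have nsCY : 'C_Y(N) <| Y by rewrite norm_normalI // norms_cent.
have nsK0Y : K0 <| Y := normalI nsMY nsCY.
have sK0C : K0 \subset 'C(N) := subset_trans (subsetIr _ _) (subsetIr _ _).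
have sNK0 : N \subset K0.
  by rewrite subsetI sNM subsetI sNY (subset_trans sNP cNP).
have nsNK0 : N <| K0 := normalS sNK0 (normal_sub nsK0Y) nsNY.
have p'K0N : p^'.-nat #|K0 : N|.
  apply: pnat_dvd (_ : p^'.-nat #|M : N|).
    by rewrite -(Lagrange_index (subsetIl _ _) sNK0) dvdn_mull.
  rewrite -card_quotient ?(subset_trans sMY) // cosetpreK.
  exact: pcore_pgroup.
have sOR : 'O_p^'(K0) \subset 'O_p^'(Y).
  apply: pcore_max (pcore_pgroup _ _) _.
  exact: char_normal_trans (pcore_char _ _) nsK0Y.
have sPC : P \subset 'C_Y(N) by rewrite subsetI sPY.
have -> : P * 'O_p^'(Y) = (P <*> M :&: 'C_Y(N)) * 'O_p^'(Y).
  rewrite norm_joinEl // -group_modl // -/K0.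
  rewrite -(cent_normal_Hall_mul_pcore nsNK0 sK0C pN p'K0N) mulgA (mulGSid sNP).
  by rewrite -mulgA (mulSGid sOR).
by rewrite normalM ?pcore_normal // (normalI nsPM nsCY).
Qed.

End SylowP'coreProduct.

Lemma minnormal_card_p_supersolvable (gT : finGroupType) p
    (G N : {group gT}) :
    p_supersolvable p G -> minnormal N G -> N <| G -> p %| #|N| -> #|N| = p.
Proof.
move=> pssG minN nsNG p_dv_N.
have chN : chief_factor G 1 N by rewrite chief_factor1E minN.
by have := pssG _ _ chN; rewrite (chief_factor_card chN) indexg1; apply.
Qed.

Theorem p_supersolvable_Sylow_p'core_normal (gT : finGroupType) p
    (Y P : {group gT}) :
    prime p -> p_solvable p Y -> p_supersolvable p Y -> p.-Sylow(Y) P ->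
  P * 'O_p^'(Y) <| Y.
Proof.
move=> prp; have [n] := ubnP #|Y|.
elim: n gT Y P => // n IHn gT Y P /ltnSE leYn psY pssY sylP.
have sPY := pHall_sub sylP.
have [Y1 | ntY] := eqsVneq Y 1.
  have P1 : P :=: 1 by apply/trivgP; rewrite -Y1.
  by rewrite P1 mul1g pcore_normal.
have [N minN sNY] := minnormal_exists ntY (normG Y).
have [/andP[ntN nNY] _] := mingroupP minN; have nsNY : N <| Y by apply/andP.
have := IHn _ (Y / N)%G (P / N)%G (leq_trans (ltn_quotient ntN sNY) leYn).
move/(_ (p_solvable_quotient nsNY psY) (p_supersolvable_quotient nNY pssY)).
move/(_ (quotient_pHall (subset_trans sPY nNY) sylP)) => IH.
have [pN | p'N] := p_solvable_minnormal psY minN nsNY; last first.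
  exact: Sylow_p'core_normal_p'quotient IH.
apply: Sylow_p'core_normal_pquotient IH => //.
have [N1 | [q prq q_dv_N]] := trivgVpdiv N; first by rewrite N1 eqxx in ntN.
have oN : #|N| = p.
  apply: minnormal_card_p_supersolvable pssY minN nsNY _.
  by have := pgroupP pN q prq q_dv_N; rewrite inE => /eqP <-.
have sNP := subset_trans (pcore_max pN nsNY) (pcore_sub_Hall sylP).
have nsNP : N <| P by rewrite /normal sNP (subset_trans sPY nNY).
have prN : prime #|N| by rewrite oN.
have nilP := pgroup_nil (pHall_pgroup sylP).
have /(prime_meetG prN) sNZ := meet_center_nil nilP nsNP ntN.
by rewrite centsC (subset_trans sNZ) ?subsetIr.
Qed.

Section MainReduction.

Variables (gT : finGroupType) (p : nat).
Implicit Types G H N P U V : {group gT}.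

Lemma chief_factor_card_quotient G N V U :
    N <| G -> chief_factor G V U -> U :&: N \subset V ->
    p_supersolvable p (G / N) -> p %| #|U / V| ->
  #|U / V| = p.
Proof.
move=> nsNG chUV sUNV pssGN.
have [chUVN idx] := chief_factor_quotient nsNG chUV sUNV.
have := pssGN _ _ chUVN.
by rewrite (chief_factor_card chUVN) (chief_factor_card chUV) idx.
Qed.

Lemma minnormal_sub_s_semipermutable G P H U :
    p.-Sylow(G) P -> H \subset P -> P^`(1) \subset H -> s_semipermutable H G ->
    minnormal U G -> U <| G -> U \subset P -> ~~ (P \subset 'C(U)) ->
  U \subset H.
Proof.
move=> sylP sHP sP'H sH minU nsUG sUP ncUP; have [sUG nUG] := andP nsUG.
have [sPG pP _] := and3P sylP; have nUP := subset_trans sPG nUG.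
have sUPH : [~: U, P] \subset U :&: H.
  by rewrite subsetI commg_subl nUP (subset_trans _ sP'H) // derg1 commgSS.
have ntUH : U :&: H != 1.
  apply: contraNneq ncUP => UH1; apply/commG1P/trivgP.
  by rewrite /= commGC -UH1.
have nUHG : G \subset 'N(U :&: H).
  apply: norm_Sylows => q prq; have [<- | qp] := eqVneq p q.
    by exists P; rewrite // normsI // sub_der1_norm.
  have [Q sylQ] := Sylow_exists q G; exists Q => //.
  apply: s_semipermutable_norm_setI (pgroupS sHP pP) (subset_trans sHP sPG) sH
    nsUG (pgroupS sUP pP) prq _ sylQ.
  by rewrite eq_sym.
have [_ minUG] := mingroupP minU.
by rewrite -(minUG (U :&: H)%G) ?ntUH ?subsetIl ?subsetIr.
Qed.

Lemma p_supersolvable_of_quotients G P H :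
    prime p -> p_solvable p G -> p.-Sylow(G) P ->
    H \subset P -> P^`(1) \subset H -> H \subset 'Phi(P) ->
    s_semipermutable H G -> p_supersolvable p 'N_G(P) ->
    (forall N, N <| G -> N :!=: 1 -> p_supersolvable p (G / N)) ->
  p_supersolvable p G.
Proof.
move=> prp psG sylP sHP sP'H sHPhi sH pssN pssGN U V chUV p_dv.
have [/maxgroupP[/andP[prVU nVG] _] nsUG] := andP chUV.
have [sUG nUG] := andP nsUG.
have [V1 | ntV] := eqVneq V 1%G; last first.
  have nsVG : V <| G by rewrite /normal (subset_trans (proper_sub prVU) sUG).
  have pssGV := pssGN V nsVG ntV.
  exact: chief_factor_card_quotient nsVG chUV (subsetIr _ _) pssGV p_dv.
subst V; have oU : #|U / 1| = #|U| by rewrite (chief_factor_card chUV) indexg1.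
have p_dv_U : p %| #|U| by rewrite -oU.
have := chUV; rewrite chief_factor1E => /andP[minU _].
have [pU | p'U] := p_solvable_minnormal psG minU nsUG; last first.
  by have := pgroupP p'U p prp p_dv_U; rewrite !inE eqxx.
have [R1 | ntR] := eqsVneq 'O_p^'(G) 1; last first.
  have sUR1 : U :&: 'O_p^'(G) \subset 1%G.
    by rewrite coprime_TIg ?(pnat_coprime pU (pcore_pgroup _ _)).
  have pssGR := pssGN _ (pcore_normal _ _) ntR.
  exact: chief_factor_card_quotient (pcore_normal _ _) chUV sUR1 pssGR p_dv.
have sUP := subset_trans (pcore_max pU nsUG) (pcore_sub_Hall sylP).
have [cUP | ncUP] := boolP (P \subset 'C(U)).
  have nsUN : U <| 'N_G(P).
    by rewrite /normal subsetI sUG (subset_trans sUP (normG P)) subIset ?nUG.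
  have minUN := minnormal_subnorm_Sylow sylP minU nsUG sUP cUP.
  by rewrite oU (minnormal_card_p_supersolvable pssN minUN nsUN p_dv_U).
have sUH :=
  minnormal_sub_s_semipermutable sylP sHP sP'H sH minU nsUG sUP ncUP.
have R'1 := trivg_pcore_quotient_Phi sylP nsUG (subset_trans sUH sHPhi) R1.
have [/andP[ntU _] _] := mingroupP minU.
have nUP := subset_trans (pHall_sub sylP) nUG.
have := p_supersolvable_Sylow_p'core_normal prp (p_solvable_quotient nsUG psG)
  (pssGN U nsUG ntU) (quotient_pHall nUP sylP).
rewrite R'1 mulg1 normal_quotientK ?(normalS sUP (pHall_sub sylP)) // => nsPG.
have defN : 'N_G(P) = G by apply/setIidPl; apply: normal_norm.
by move: pssN; rewrite defN => /(_ _ _ chUV p_dv).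
Qed.

End MainReduction.

Unset Implicit Arguments.

Theorem theorem1p2 (gT : finGroupType) (p : nat) (G P H : {group gT}) :
  prime p ->
  p_solvable p G ->
  P \in 'Syl_p(G) ->
  H \subset P ->
  P^`(1) \subset H ->
  H \subset 'Phi(P) ->
  s_semipermutable H G ->
  p_supersolvable p 'N_G(P) ->
  p_supersolvable p G.
Proof.
move=> prp; have [n] := ubnP #|G|.
elim: n gT G P H => // n IHn gT G P H /ltnSE leGn psG.
rewrite inE => sylP sHP sP'H sHPhi sH pssN.
have pssGN (N : {group gT}) : N <| G -> N :!=: 1 -> p_supersolvable p (G / N).
  move=> nsNG ntN; have [sNG nNG] := andP nsNG.
  have nNP := subset_trans (pHall_sub sylP) nNG.
  apply: (IHn _ (G / N)%G (P / N)%G (H / N)%G).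
  - exact: leq_trans (ltn_quotient ntN sNG) leGn.
  - exact: p_solvable_quotient.
  - by rewrite inE quotient_pHall.
  - exact: quotientS.
  - by rewrite -quotient_der ?quotientS.
  - by rewrite -(quotient_Phi (pHall_pgroup sylP) nNP) quotientS.
  - exact: s_semipermutable_quotient sylP sHP sH.
  rewrite (quotient_subnorm_Sylow nsNG sylP).
  exact: p_supersolvable_quotient (subset_trans (subsetIl _ _) nNG) pssN.
exact (p_supersolvable_of_quotients prp psG sylP sHP sP'H sHPhi sH pssN pssGN).
Qed.
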